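(* Let $c,d\in(0,1]$, let $B=B(c,d)$, and define $h(x)=\dfrac{xF(c,d;c+d;x)}{\log(1/(1-x))}$ for $x\in(0,1)$. Let $p\ge1$. Then for all $x\in(0,1)$, with $z=1-(1-x)^{1/p}$, $$B\ge B\,h(z)\ge B\,h(x)\ge 1\qquad\text{and}\qquad F(c,d;c+d;z)\ge \tfrac1p F(c,d;c+d;x).$$ When $c=d=1$ one has $B=1$ and $h\equiv1$, so the first chain consists of equalities.
   Context: $F(a,b;c;x)$ is the Gaussian hypergeometric function $\sum_{n\ge0}\frac{(a)_n(b)_n}{(c)_n}\frac{x^n}{n!}$ ($|x|<1$), with $(a)_n=a(a+1)\cdots(a+n-1)$, $(a)_0=1$. $B(c,d)=\Gamma(c)\Gamma(d)/\Gamma(c+d)$ is the beta function. *)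

From Stdlib Require Import Reals Arith ClassicalEpsilon.
Open Scope R_scope.

Fixpoint poch (a : R) (n : nat) : R :=
  match n with
  | O => 1
  | S k => poch a k * (a + INR k)
  end.

Definition hyp_term (a b c x : R) (n : nat) : R :=
  poch a n * poch b n / poch c n * x ^ n / INR (Factorial.fact n).

(* F(a,b;c;x) := the sum of the series (well defined for |x| < 1, c not a
   non-positive integer). *)
Definition F (a b c x : R) : R :=
  epsilon (inhabits 0) (fun l => infinite_sum (hyp_term a b c x) l).

(* Gamma via Gauss' product: Gamma(s) = lim n^s n! / (s(s+1)...(s+n)), s > 0 *)
Definition gauss_seq (s : R) (n : nat) : R :=
  Rpower (INR n) s * INR (Factorial.fact n) / poch s (S n).

Definition Gamma (s : R) : R :=
  epsilon (inhabits 0) (fun g => Un_cv (gauss_seq s) g).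

Definition Beta (c d : R) : R := Gamma c * Gamma d / Gamma (c + d).

Definition h (c d x : R) : R := x * F c d (c + d) x / ln (1 / (1 - x)).

(* Write F(x) = sum a_n x^n and Q(x) = log(1/(1-x)) / x = sum x^n / (n+1), so that
   h = F / Q.  Everything is driven by the normalized coefficients
   t_n = (n+1) a_n, the ratio of the n-th coefficients of F and Q:
   - t_0 = 1 and (t_n) is nonincreasing when c, d <= 1, hence t_n <= 1, which
     gives F <= Q, i.e. h <= 1;
   - via Gauss' product formula for Gamma, t_n -> 1/B, hence t_n >= 1/B, which
     gives Q <= B F, i.e. B h >= 1;
   - a power series whose coefficients have a nonincreasing ratio to those of
     another one has a nonincreasing quotient on [0,1) (a discrete
     Biernacki-Krzyz argument), hence h is nonincreasing, so h(z) >= h(x);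
   - log(1/(1-z)) = log(1/(1-x)) / p, which turns h(z) >= h(x) into
     F(z) >= (x / (p z)) F(x) >= F(x) / p.
   The file develops, in order: the coefficients, the logarithm series, two
   comparison principles for series, the Gauss product for Gamma on (0,2], the
   limit of t_n, and finally the theorem.  When c = d = 1, t_n = 1 for all n,
   so F = Q, h = 1 and B = 1. *)
From Stdlib Require Import Reals Lra Lia Psatz ClassicalEpsilon FunctionalExtensionality.
From Coquelicot Require Import Coquelicot.
Open Scope R_scope.

Lemma poch_pos (a : R) (n : nat) : 0 < a -> 0 < poch a n.
Proof.
  intros Ha; induction n as [|n IH]; simpl; [lra|].
  apply Rmult_lt_0_compat; [exact IH|]. pose proof (pos_INR n); lra.
Qed.

Lemma poch_shift (a : R) (m : nat) : poch (a - 1) (S m) = (a - 1) * poch a m.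
Proof.
  induction m as [|m IH]; simpl in *; [ring|].
  rewrite IH. destruct m; simpl; ring.
Qed.

Definition fcoef (c d : R) (n : nat) : R :=
  poch c n * poch d n / poch (c + d) n / INR (Factorial.fact n).

(* t_n = (n+1) a_n, the ratio of a_n to the n-th coefficient 1/(n+1) of Q. *)
Definition tcoef (c d : R) (n : nat) : R := INR (S n) * fcoef c d n.

Lemma fcoef_pos (c d : R) (n : nat) : 0 < c -> 0 < d -> 0 < fcoef c d n.
Proof.
  intros Hc Hd. unfold fcoef.
  pose proof (poch_pos c n Hc). pose proof (poch_pos d n Hd).
  pose proof (poch_pos (c + d) n ltac:(lra)). pose proof (INR_fact_lt_0 n).
  repeat apply Rdiv_lt_0_compat; try assumption. now apply Rmult_lt_0_compat.
Qed.

Lemma fcoef_S (c d : R) (n : nat) : 0 < c -> 0 < d ->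
  fcoef c d (S n) =
  fcoef c d n * ((c + INR n) * (d + INR n) / ((c + d + INR n) * INR (S n))).
Proof.
  intros Hc Hd. unfold fcoef. simpl poch. rewrite fact_simpl, mult_INR, S_INR.
  pose proof (poch_pos c n Hc). pose proof (poch_pos d n Hd).
  pose proof (poch_pos (c + d) n ltac:(lra)). pose proof (INR_fact_lt_0 n).
  pose proof (pos_INR n). field. repeat split; lra.
Qed.

Lemma fcoef_tcoef (c d : R) (n : nat) : fcoef c d n = tcoef c d n * / INR (S n).
Proof. unfold tcoef. field. apply not_0_INR; lia. Qed.

Lemma tcoef_0 (c d : R) : tcoef c d 0 = 1.
Proof. unfold tcoef, fcoef; simpl. field. Qed.

(* t_(n+1) / t_n = (n+2)(c+n)(d+n) / ((n+1)^2 (c+d+n)) <= 1 when c, d <= 1. *)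
Lemma tcoef_S_le (c d : R) (n : nat) : 0 < c <= 1 -> 0 < d <= 1 ->
  tcoef c d (S n) <= tcoef c d n.
Proof.
  intros Hc Hd. unfold tcoef. rewrite fcoef_S by lra.
  pose proof (fcoef_pos c d n ltac:(lra) ltac:(lra)).
  set (A := fcoef c d n) in *. rewrite !S_INR. pose proof (pos_INR n).
  set (m := INR n) in *.
  assert (Hpoly : (m + 2) * ((c + m) * (d + m)) <= (m + 1) * (m + 1) * (c + d + m)).
  { assert (c * d <= 1) by nra. assert (0 <= m * (1 - c * d)) by nra.
    assert (0 <= c * (1 - d)) by nra. assert (0 <= d * (1 - c)) by nra. nra. }
  assert (Hden : 0 < (c + d + m) * (m + 1)) by nra.
  replace ((m + 1 + 1) * (A * ((c + m) * (d + m) / ((c + d + m) * (m + 1)))))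
    with (A * ((m + 2) * ((c + m) * (d + m))) / ((c + d + m) * (m + 1))) by (field; lra).
  apply Rmult_le_reg_r with ((c + d + m) * (m + 1)); [exact Hden|].
  unfold Rdiv. rewrite Rmult_assoc, Rinv_l by lra. nra.
Qed.

Lemma tcoef_antitone (c d : R) (m n : nat) : 0 < c <= 1 -> 0 < d <= 1 ->
  (m <= n)%nat -> tcoef c d n <= tcoef c d m.
Proof.
  intros Hc Hd Hmn. induction Hmn as [|n _ IH]; [lra|].
  pose proof (tcoef_S_le c d n Hc Hd). lra.
Qed.

Lemma tcoef_le_1 (c d : R) (n : nat) : 0 < c <= 1 -> 0 < d <= 1 -> tcoef c d n <= 1.
Proof. intros Hc Hd. rewrite <- (tcoef_0 c d). apply tcoef_antitone; auto; lia. Qed.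

Lemma tcoef_unit (n : nat) : tcoef 1 1 n = 1.
Proof.
  induction n as [|n IH]; [apply tcoef_0|]. unfold tcoef in *. rewrite fcoef_S by lra.
  rewrite !S_INR in *. pose proof (pos_INR n).
  assert (E : fcoef 1 1 n = / (INR n + 1)).
  { apply Rmult_eq_reg_l with (INR n + 1); [rewrite IH; field|]; lra. }
  rewrite E. field. lra.
Qed.

Definition log_partial (N : nat) (y : R) : R :=
  sum_f_R0 (fun k => y ^ S k / INR (S k)) N.

Lemma log_partial_0 (N : nat) : log_partial N 0 = 0.
Proof.
  unfold log_partial. induction N as [|N IH]; [simpl; field|].
  rewrite tech5, IH, pow_i by lia. unfold Rdiv; ring.
Qed.

Lemma log_partial_derive (N : nat) (y : R) :
  is_derive (log_partial N) y (sum_f_R0 (fun k => y ^ k) N).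
Proof.
  induction N as [|N IH]; unfold log_partial in *; simpl sum_f_R0.
  - auto_derive; [easy|]. simpl; field.
  - apply (is_derive_plus (fun y => sum_f_R0 (fun k => y ^ S k / INR (S k)) N)
            (fun y => y ^ S (S N) / INR (S (S N)))); [exact IH|].
    pose proof (pos_INR (S N)). auto_derive; [easy|].
    change (match N with 0%nat => 1 | S _ => INR N + 1 end) with (INR (S N)). field. lra.
Qed.

(* Taylor remainder: 0 <= log(1/(1-x)) - S_N(x) <= x^(N+2)/(1-x), by the mean
   value theorem and the finite geometric sum for the derivative. *)
Lemma log_remainder_bound (N : nat) (x : R) : 0 < x < 1 ->
  0 <= ln (1 / (1 - x)) - log_partial N x <= x ^ S (S N) / (1 - x).
Proof.
  intros Hx.
  destruct (MVT_cor2 (fun y => ln (1 / (1 - y)) - log_partial N y)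
     (fun y => / (1 - y) - sum_f_R0 (fun k => y ^ k) N) 0 x) as [xi [E Hxi]]; [lra| |].
  { intros y Hy. apply is_derive_Reals.
    apply (is_derive_minus (fun y => ln (1 / (1 - y))) (log_partial N));
      [|apply log_partial_derive].
    auto_derive; [repeat split; try lra; apply Rdiv_lt_0_compat; lra|]. field; lra. }
  rewrite log_partial_0, !Rminus_0_r, Rdiv_1_r, ln_1, Rminus_0_r in E.
  assert (Hgeom : sum_f_R0 (fun k => xi ^ k) N = (1 - xi ^ S N) / (1 - xi)).
  { apply Rmult_eq_reg_r with (xi - 1); [|lra].
    rewrite GP_finite. replace (N + 1)%nat with (S N) by lia. field. lra. }
  assert (Erem : ln (1 / (1 - x)) - log_partial N x = xi ^ S N / (1 - xi) * x).
  { rewrite Hgeom in E. replace (/ (1 - xi) - (1 - xi ^ S N) / (1 - xi))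
      with (xi ^ S N / (1 - xi)) in E by (field; lra). lra. }
  rewrite Erem.
  assert (0 <= xi ^ S N) by (apply pow_le; lra).
  assert (xi ^ S N <= x ^ S N) by (apply pow_incr; lra).
  assert (Hq : xi ^ S N / (1 - xi) <= x ^ S N / (1 - x)).
  { unfold Rdiv. apply Rmult_le_compat; auto.
    - left; apply Rinv_0_lt_compat; lra.
    - apply Rinv_le_contravar; lra. }
  split.
  - apply Rmult_le_pos; [apply Rdiv_le_0_compat|]; lra.
  - replace (x ^ S (S N) / (1 - x)) with (x ^ S N / (1 - x) * x) by (simpl; field; lra).
    apply Rmult_le_compat_r; lra.
Qed.

Lemma log_partial_cv (x : R) : 0 < x < 1 ->
  is_lim_seq (fun N => log_partial N x) (ln (1 / (1 - x))).
Proof.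
  intros Hx. set (L := ln (1 / (1 - x))).
  apply is_lim_seq_le_le with (u := fun N => L - x ^ S (S N) / (1 - x)) (w := fun _ => L).
  { intros N. pose proof (log_remainder_bound N x Hx). unfold L. lra. }
  2: apply is_lim_seq_const.
  assert (Hgeom : is_lim_seq (fun N => x ^ S (S N) / (1 - x)) 0).
  { assert (G : is_lim_seq (fun N => x ^ S (S N)) 0).
    { apply (is_lim_seq_incr_1 (fun n => x ^ S n)), (is_lim_seq_incr_1 (fun n => x ^ n)).
      apply is_lim_seq_geom. rewrite Rabs_pos_eq; lra. }
    apply (is_lim_seq_scal_r _ (/ (1 - x))) in G. simpl in G.
    rewrite Rmult_0_l in G. exact G. }
  replace (Finite L) with (Finite (L - 0)) by (f_equal; ring).
  apply is_lim_seq_minus'; [apply is_lim_seq_const|exact Hgeom].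
Qed.

Definition Q (x : R) : R := ln (1 / (1 - x)) / x.

Lemma Q_series (x : R) : 0 < x < 1 ->
  infinite_sum (fun n => / INR (S n) * x ^ n) (Q x).
Proof.
  intros Hx. apply is_lim_seq_Reals.
  apply is_lim_seq_ext with (u := fun N => log_partial N x * / x).
  { intros N. unfold log_partial. induction N as [|N IH]; [simpl; field; lra|].
    rewrite !tech5, <- IH. change (x ^ S (S N)) with (x * x ^ S N).
    assert (0 < INR (S (S N))) by (apply lt_0_INR; lia). field. lra. }
  apply (is_lim_seq_scal_r _ (/ x) _ (log_partial_cv x Hx)).
Qed.

Lemma ln_inv_compl_pos (x : R) : 0 < x < 1 -> 0 < ln (1 / (1 - x)).
Proof.
  intros Hx. rewrite <- ln_1. apply ln_increasing; [lra|].
  unfold Rdiv. rewrite Rmult_1_l, <- Rinv_1. apply Rinv_lt_contravar; lra.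
Qed.

Lemma Q_pos (x : R) : 0 < x < 1 -> 0 < Q x.
Proof. intros Hx. apply Rdiv_lt_0_compat; [apply ln_inv_compl_pos|]; lra. Qed.

Lemma h_quotient (c d x : R) : 0 < x < 1 -> h c d x = F c d (c + d) x / Q x.
Proof. intros Hx. unfold h, Q. pose proof (ln_inv_compl_pos x Hx). field. lra. Qed.

Lemma infinite_sum_le_scal (a b : nat -> R) (k A B : R) :
  (forall n, a n <= k * b n) -> infinite_sum a A -> infinite_sum b B -> A <= k * B.
Proof.
  intros Hab Ha Hb.
  apply Rle_cv_lim with (Un := fun N => sum_f_R0 a N) (Vn := fun N => k * sum_f_R0 b N);
    [|exact Ha|].
  - intros N. rewrite scal_sum.
    apply sum_growing. intros n. rewrite Rmult_comm. apply Hab.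
  - apply is_lim_seq_Reals, (is_lim_seq_scal_l _ k B), is_lim_seq_Reals, Hb.
Qed.

(* If al_n / be_n is nonincreasing, then (sum al_n y^n) / (sum be_n y^n) is
   nonincreasing in y >= 0: the cross difference P(x) Q(y) - P(y) Q(x) of the
   partial sums grows with N by nonnegative terms. *)
Section RatioMonotone.
Variables (al be : nat -> R) (x y : R).
Hypothesis ratio_antitone : forall m n, (m <= n)%nat -> al n * be m <= al m * be n.
Hypothesis x_le_y : 0 <= x <= y.

Let Px (N : nat) : R := sum_f_R0 (fun n => al n * x ^ n) N.
Let Py (N : nat) : R := sum_f_R0 (fun n => al n * y ^ n) N.
Let Qx (N : nat) : R := sum_f_R0 (fun n => be n * x ^ n) N.
Let Qy (N : nat) : R := sum_f_R0 (fun n => be n * y ^ n) N.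

(* x^(N+1) / x^k <= y^(N+1) / y^k for k <= N, written without division. *)
Lemma pow_cross (k N : nat) : (k <= N)%nat -> x ^ S N * y ^ k <= y ^ S N * x ^ k.
Proof.
  intros Hk. replace (S N) with (k + (S N - k))%nat by lia. rewrite !pow_add.
  assert (0 <= x ^ k) by (apply pow_le; lra).
  assert (0 <= y ^ k) by (apply pow_le; lra).
  assert (x ^ (S N - k) <= y ^ (S N - k)) by (apply pow_incr; lra).
  assert (0 <= x ^ k * y ^ k) by (apply Rmult_le_pos; lra).
  nra.
Qed.

(* Adding the (N+1)-st terms adds a sum of products of two nonnegative factors. *)
Lemma cross_partial_step (N : nat) :
  Px (S N) * Qy (S N) - Py (S N) * Qx (S N) =
  (Px N * Qy N - Py N * Qx N) +
  sum_f_R0 (fun k => (be (S N) * al k - al (S N) * be k)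
                     * (y ^ S N * x ^ k - x ^ S N * y ^ k)) N.
Proof.
  unfold Px, Py, Qx, Qy. rewrite !tech5.
  enough (forall M, be (S N) * (y ^ S N * sum_f_R0 (fun n => al n * x ^ n) M
                                - x ^ S N * sum_f_R0 (fun n => al n * y ^ n) M)
                    - al (S N) * (y ^ S N * sum_f_R0 (fun n => be n * x ^ n) M
                                - x ^ S N * sum_f_R0 (fun n => be n * y ^ n) M)
                    = sum_f_R0 (fun k => (be (S N) * al k - al (S N) * be k)
                                * (y ^ S N * x ^ k - x ^ S N * y ^ k)) M)
    as Hsplit by (rewrite <- Hsplit; ring).
  induction M as [|M IH]; [simpl; ring|]. rewrite !tech5, <- IH. ring.
Qed.

Lemma cross_partial_nonneg (N : nat) : 0 <= Px N * Qy N - Py N * Qx N.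
Proof.
  induction N as [|N IH]; [unfold Px, Py, Qx, Qy; simpl; lra|].
  rewrite cross_partial_step. apply Rplus_le_le_0_compat; [exact IH|].
  rewrite <- (sum_eq_R0 (fun _ => 0) N) by easy. apply sum_Rle.
  intros k Hk. apply Rmult_le_pos.
  - pose proof (ratio_antitone k (S N) ltac:(lia)). lra.
  - pose proof (pow_cross k N Hk). lra.
Qed.

Lemma series_ratio_antitone (P1 Q1 P2 Q2 : R) :
  infinite_sum (fun n => al n * x ^ n) P1 -> infinite_sum (fun n => be n * x ^ n) Q1 ->
  infinite_sum (fun n => al n * y ^ n) P2 -> infinite_sum (fun n => be n * y ^ n) Q2 ->
  P2 * Q1 <= P1 * Q2.
Proof.
  intros HP1 HQ1 HP2 HQ2.
  enough (0 <= P1 * Q2 - P2 * Q1) by lra.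
  apply Rle_cv_lim with (Un := fun _ => 0) (Vn := fun N => Px N * Qy N - Py N * Qx N).
  - exact cross_partial_nonneg.
  - apply is_lim_seq_Reals, is_lim_seq_const.
  - apply CV_minus; apply CV_mult; assumption.
Qed.
End RatioMonotone.

(* With u_s(n) = gauss_seq s (n+1), the sequence
   u_s is nondecreasing, and for s <= 1 it is dominated by the nonincreasing
   sequence v_s(n) = (n+2)^s (n+1)! / (s)_(n+2); the case 1 < s <= 2 reduces to
   s - 1 by u_s(n) = (s-1)(n+1)/(s+n+1) u_(s-1)(n). *)
Lemma Rpower_pos (a s : R) : 0 < Rpower a s.
Proof. apply exp_pos. Qed.

Lemma Rpower_base_1 (s : R) : Rpower 1 s = 1.
Proof. unfold Rpower. rewrite ln_1, Rmult_0_r. apply exp_0. Qed.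

(* ((a+1)/a)^s >= 1 + s/(a+1), from log(1+1/a) >= 1/(a+1) and exp y >= 1 + y. *)
Lemma Rpower_succ_lower (a s : R) : 0 < a -> 0 < s ->
  Rpower a s * (1 + s / (a + 1)) <= Rpower (a + 1) s.
Proof.
  intros Ha Hs. unfold Rpower.
  replace (s * ln (a + 1)) with (s * ln a + s * (ln (a + 1) - ln a)) by ring.
  rewrite exp_plus.
  assert (Hlog : 1 / (a + 1) <= ln (a + 1) - ln a).
  { pose proof (exp_ineq1_le (ln (a / (a + 1)))) as Hexp.
    rewrite exp_ln in Hexp by (apply Rdiv_lt_0_compat; lra).
    unfold Rdiv in Hexp. rewrite ln_mult, ln_Rinv in Hexp by (try apply Rinv_0_lt_compat; lra).
    replace (a * / (a + 1)) with (1 - 1 / (a + 1)) in Hexp by (field; lra). lra. }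
  apply Rmult_le_compat_l; [left; apply exp_pos|].
  eapply Rle_trans; [|apply exp_ineq1_le].
  replace (s / (a + 1)) with (s * (1 / (a + 1))) by (field; lra).
  apply Rplus_le_compat_l, Rmult_le_compat_l; lra.
Qed.

Lemma Rpower_bernoulli (t s : R) : 0 <= t -> 0 < s <= 1 -> Rpower (1 + t) s <= 1 + s * t.
Proof.
  intros [Ht|<-] Hs; [|rewrite Rplus_0_r, Rpower_base_1; lra].
  destruct (MVT_cor2 (fun y => Rpower y s) (fun y => s * Rpower y (s - 1)) 1 (1 + t))
    as [xi [E Hxi]]; [lra| |].
  { intros y Hy. apply derivable_pt_lim_power. lra. }
  rewrite Rpower_base_1 in E.
  assert (Hxi1 : Rpower xi (s - 1) <= 1).
  { apply Rle_trans with (Rpower xi 0); [apply Rle_Rpower; lra|rewrite Rpower_O; lra]. }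
  assert (0 <= s * t * (1 - Rpower xi (s - 1))) by (apply Rmult_le_pos; nra).
  nra.
Qed.

Lemma Rpower_succ_upper (a s : R) : 0 < a -> 0 < s <= 1 ->
  Rpower (a + 1) s <= Rpower a s * (1 + s / a).
Proof.
  intros Ha Hs. assert (0 < / a) by (apply Rinv_0_lt_compat; lra).
  replace (a + 1) with (a * (1 + / a)) by (field; lra).
  rewrite <- Rpower_mult_distr by lra.
  apply Rmult_le_compat_l; [left; apply Rpower_pos|].
  replace (s / a) with (s * / a) by reflexivity. apply Rpower_bernoulli; lra.
Qed.

(* u_s, shifted by one so that the base of the power is positive. *)
Definition gauss_tail (s : R) (n : nat) : R := gauss_seq s (S n).

Definition gauss_upper (s : R) (n : nat) : R :=
  Rpower (INR (S (S n))) s * INR (Factorial.fact (S n)) / poch s (S (S n)).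

Lemma gauss_tail_pos (s : R) (n : nat) : 0 < s -> 0 < gauss_tail s n.
Proof.
  intros Hs. apply Rdiv_lt_0_compat; [apply Rmult_lt_0_compat|apply poch_pos; lra].
  - apply Rpower_pos.
  - apply INR_fact_lt_0.
Qed.

Lemma gauss_tail_incr (s : R) (n : nat) : 0 < s -> gauss_tail s n <= gauss_tail s (S n).
Proof.
  intros Hs. unfold gauss_tail, gauss_seq.
  change (poch s (S (S (S n)))) with (poch s (S (S n)) * (s + INR (S (S n)))).
  rewrite (fact_simpl (S n)), mult_INR, !(S_INR (S n)).
  set (a := INR (S n)). assert (Ha : 0 < a) by (apply lt_0_INR; lia).
  pose proof (Rpower_succ_lower a s Ha Hs).
  set (P := poch s (S (S n))). assert (0 < P) by (apply poch_pos; lra).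
  set (f := INR (Factorial.fact (S n))). assert (Hf : 0 < f) by apply INR_fact_lt_0.
  set (A := Rpower a s) in *. set (A' := Rpower (a + 1) s) in *.
  assert (Hkey : A * (a + 1 + s) <= A' * (a + 1)).
  { replace (A * (a + 1 + s)) with (A * (1 + s / (a + 1)) * (a + 1)) by (field; lra).
    apply Rmult_le_compat_r; lra. }
  replace (A' * ((a + 1) * f) / (P * (s + (a + 1))))
    with ((A' * (a + 1)) * (f / (P * (s + (a + 1))))) by (field; lra).
  replace (A * f / P) with ((A * (a + 1 + s)) * (f / (P * (s + (a + 1))))) by (field; lra).
  apply Rmult_le_compat_r; [|lra]. apply Rlt_le, Rdiv_lt_0_compat; nra.
Qed.

Lemma gauss_tail_le_upper (s : R) (n : nat) : 0 < s -> gauss_tail s n <= gauss_upper s n.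
Proof.
  intros Hs. unfold gauss_tail, gauss_upper, gauss_seq, Rdiv.
  apply Rmult_le_compat_r; [left; apply Rinv_0_lt_compat, poch_pos; lra|].
  apply Rmult_le_compat_r; [left; apply INR_fact_lt_0|].
  apply Rle_Rpower_l; [lra|]. split; [apply lt_0_INR; lia|apply le_INR; lia].
Qed.

Lemma gauss_upper_decr (s : R) (n : nat) : 0 < s <= 1 ->
  gauss_upper s (S n) <= gauss_upper s n.
Proof.
  intros Hs. unfold gauss_upper.
  change (poch s (S (S (S n)))) with (poch s (S (S n)) * (s + INR (S (S n)))).
  rewrite (S_INR (S (S n))), (fact_simpl (S n)), mult_INR, !(S_INR (S n)).
  set (a := INR (S n)). assert (Ha : 0 < a) by (apply lt_0_INR; lia).
  pose proof (Rpower_succ_upper (a + 1) s ltac:(lra) Hs).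
  set (P := poch s (S (S n))). assert (0 < P) by (apply poch_pos; lra).
  set (f := INR (Factorial.fact (S n))). assert (Hf : 0 < f) by apply INR_fact_lt_0.
  set (A := Rpower (a + 1) s) in *. set (A' := Rpower (a + 1 + 1) s) in *.
  assert (Hkey : A' * (a + 1) <= A * (a + 1 + s)).
  { replace (A * (a + 1 + s)) with (A * (1 + s / (a + 1)) * (a + 1)) by (field; lra).
    apply Rmult_le_compat_r; lra. }
  replace (A' * ((a + 1) * f) / (P * (s + (a + 1))))
    with ((A' * (a + 1)) * (f / (P * (s + (a + 1))))) by (field; lra).
  replace (A * f / P) with ((A * (a + 1 + s)) * (f / (P * (s + (a + 1))))) by (field; lra).
  apply Rmult_le_compat_r; [|lra]. apply Rlt_le, Rdiv_lt_0_compat; nra.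
Qed.

(* The functional equation Gamma(s) = (s-1) Gamma(s-1) at the level of u. *)
Lemma gauss_tail_shift (s : R) (n : nat) : 1 < s ->
  gauss_tail s n = (s - 1) * INR (S n) / (s + INR (S n)) * gauss_tail (s - 1) n.
Proof.
  intros Hs. unfold gauss_tail, gauss_seq.
  assert (Hn : 0 < INR (S n)) by (apply lt_0_INR; lia).
  replace (Rpower (INR (S n)) s) with (INR (S n) * Rpower (INR (S n)) (s - 1)).
  2: { rewrite <- (Rpower_1 (INR (S n))) at 1 by lra.
       rewrite <- Rpower_plus. f_equal. ring. }
  assert (E : poch (s - 1) (S (S (S n))) = (s - 1) * poch s (S (S n))) by apply poch_shift.
  change (poch (s - 1) (S (S (S n)))) with (poch (s - 1) (S (S n)) * (s - 1 + INR (S (S n)))) in E.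
  rewrite (S_INR (S n)) in E.
  assert (0 < poch s (S (S n))) by (apply poch_pos; lra).
  assert (0 < poch (s - 1) (S (S n))) by (apply poch_pos; lra).
  assert (Hpoch : poch s (S (S n)) = poch (s - 1) (S (S n)) * (s + INR (S n)) / (s - 1)).
  { apply Rmult_eq_reg_l with (s - 1); [|lra]. rewrite <- E. field. lra. }
  rewrite Hpoch. field. repeat split; lra.
Qed.

Lemma gauss_tail_bounded (s : R) : 0 < s <= 2 -> exists M, forall n, gauss_tail s n <= M.
Proof.
  intros Hs.
  assert (Hbound : forall r n, 0 < r <= 1 -> gauss_tail r n <= gauss_upper r 0).
  { intros r n Hr. eapply Rle_trans; [apply gauss_tail_le_upper; lra|].
    induction n as [|n IH]; [lra|]. eapply Rle_trans; [apply gauss_upper_decr|]; auto. }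
  destruct (Rle_or_lt s 1) as [Hs1|Hs1].
  - exists (gauss_upper s 0). intros n. apply Hbound. lra.
  - exists ((s - 1) * gauss_upper (s - 1) 0). intros n. rewrite gauss_tail_shift by lra.
    pose proof (Hbound (s - 1) n ltac:(lra)). pose proof (gauss_tail_pos (s - 1) n ltac:(lra)).
    pose proof (pos_INR (S n)).
    assert (Hfrac : 0 <= INR (S n) / (s + INR (S n)) <= 1).
    { split; [apply Rdiv_le_0_compat; lra|].
      apply Rmult_le_reg_r with (s + INR (S n)); [lra|].
      unfold Rdiv. rewrite Rmult_assoc, Rinv_l; lra. }
    replace ((s - 1) * INR (S n) / (s + INR (S n)) * gauss_tail (s - 1) n)
      with ((s - 1) * (INR (S n) / (s + INR (S n)) * gauss_tail (s - 1) n))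
      by (unfold Rdiv; ring).
    apply Rmult_le_compat_l; nra.
Qed.

Lemma Gamma_gauss (s : R) : 0 < s <= 2 ->
  Un_cv (gauss_tail s) (Gamma s) /\ 0 < Gamma s.
Proof.
  intros Hs. destruct (gauss_tail_bounded s Hs) as [M HM].
  assert (Hincr : Un_growing (gauss_tail s)) by (intros n; apply gauss_tail_incr; lra).
  destruct (growing_cv (gauss_tail s) Hincr) as [l Hl].
  { exists M. intros x [i ->]. apply HM. }
  assert (Hg : Un_cv (gauss_seq s) l).
  { apply CV_shift with 1%nat. eapply Un_cv_ext; [|exact Hl].
    intros n. unfold gauss_tail. f_equal. lia. }
  assert (HGamma : Un_cv (gauss_seq s) (Gamma s)).
  { unfold Gamma. apply epsilon_spec. exists l; exact Hg. }
  rewrite <- (UL_sequence _ _ _ Hg HGamma). split; [exact Hl|].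
  pose proof (growing_ineq (gauss_tail s) l Hincr Hl 0).
  pose proof (gauss_tail_pos s 0 ltac:(lra)). lra.
Qed.

(* The limit of t_n: t_(N+2) * u_c(N) u_d(N) / u_(c+d)(N) = (N+3)/(N+2), and the
   Gauss products converge to Gamma c, Gamma d, Gamma (c+d). *)

Lemma tcoef_gauss (c d : R) (N : nat) : 0 < c -> 0 < d ->
  tcoef c d (S (S N)) * (gauss_tail c N * gauss_tail d N / gauss_tail (c + d) N) =
  INR (S (S (S N))) / INR (S (S N)).
Proof.
  intros Hc Hd. unfold tcoef, fcoef, gauss_tail, gauss_seq.
  assert (Ha : 0 < INR (S N)) by (apply lt_0_INR; lia).
  rewrite (Rpower_plus c d (INR (S N))), (fact_simpl (S N)), mult_INR.
  pose proof (Rpower_pos (INR (S N)) c). pose proof (Rpower_pos (INR (S N)) d).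
  pose proof (poch_pos c (S (S N)) Hc). pose proof (poch_pos d (S (S N)) Hd).
  pose proof (poch_pos (c + d) (S (S N)) ltac:(lra)). pose proof (INR_fact_lt_0 (S N)).
  assert (0 < INR (S (S N))) by (apply lt_0_INR; lia).
  field. repeat split; lra.
Qed.

Lemma succ_ratio_cv : is_lim_seq (fun N => INR (S (S (S N))) / INR (S (S N))) 1.
Proof.
  apply is_lim_seq_ext with (u := fun N => 1 + / INR (S (S N))).
  { intros N. rewrite (S_INR (S (S N))). field. apply not_0_INR; lia. }
  replace (Finite 1) with (Rbar_plus 1 0) by (simpl; f_equal; ring).
  apply is_lim_seq_plus'; [apply is_lim_seq_const|].
  replace (Finite 0) with (Rbar_inv p_infty) by reflexivity.
  apply is_lim_seq_inv; [|discriminate].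
  apply (is_lim_seq_incr_1 (fun n => INR (S n))), (is_lim_seq_incr_1 INR), is_lim_seq_INR.
Qed.

Lemma Beta_tcoef_cv (c d : R) : 0 < c <= 1 -> 0 < d <= 1 ->
  0 < Beta c d /\ Un_cv (fun N => tcoef c d (S (S N))) (/ Beta c d).
Proof.
  intros Hc Hd.
  destruct (Gamma_gauss c ltac:(lra)) as [Lc Pc].
  destruct (Gamma_gauss d ltac:(lra)) as [Ld Pd].
  destruct (Gamma_gauss (c + d) ltac:(lra)) as [Lcd Pcd].
  assert (HB : 0 < Beta c d) by (apply Rdiv_lt_0_compat; [apply Rmult_lt_0_compat|]; auto).
  split; [exact HB|].
  apply is_lim_seq_Reals in Lc, Ld, Lcd.
  assert (Hg : is_lim_seq (fun N => gauss_tail c N * gauss_tail d N / gauss_tail (c + d) N)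
                          (Beta c d)).
  { apply is_lim_seq_mult'; [apply is_lim_seq_mult'; auto|].
    apply (is_lim_seq_inv _ (Finite (Gamma (c + d))) Lcd). intro E; injection E; lra. }
  apply is_lim_seq_Reals.
  apply is_lim_seq_ext with (u := fun N => INR (S (S (S N))) / INR (S (S N))
      * / (gauss_tail c N * gauss_tail d N / gauss_tail (c + d) N)).
  { intros N. rewrite <- (tcoef_gauss c d N) by lra.
    pose proof (gauss_tail_pos c N ltac:(lra)). pose proof (gauss_tail_pos d N ltac:(lra)).
    pose proof (gauss_tail_pos (c + d) N ltac:(lra)). field. repeat split; lra. }
  replace (/ Beta c d) with (1 * / Beta c d) by ring.
  apply is_lim_seq_mult'; [exact succ_ratio_cv|].
  apply (is_lim_seq_inv _ (Finite (Beta c d)) Hg). intro E; injection E; lra.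
Qed.

Lemma hyp_term_fcoef (c d x : R) : 0 < c -> 0 < d ->
  hyp_term c d (c + d) x = fun n => fcoef c d n * x ^ n.
Proof.
  intros Hc Hd. apply functional_extensionality; intros n. unfold hyp_term, fcoef.
  pose proof (INR_fact_lt_0 n). pose proof (poch_pos (c + d) n ltac:(lra)). field. lra.
Qed.

Lemma power_substitution (x p : R) : 0 < x < 1 -> 1 <= p ->
  let z := 1 - Rpower (1 - x) (1 / p) in
  0 < z <= x /\ ln (1 / (1 - z)) = / p * ln (1 / (1 - x)).
Proof.
  intros Hx Hp z.
  assert (Hl : ln (1 - x) < 0) by (rewrite <- ln_1; apply ln_increasing; lra).
  assert (Hp' : 0 < 1 / p <= 1).
  { split; [apply Rdiv_lt_0_compat; lra|].
    unfold Rdiv. rewrite Rmult_1_l, <- Rinv_1. apply Rinv_le_contravar; lra. }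
  split.
  - unfold z, Rpower. split.
    + assert (exp (1 / p * ln (1 - x)) < exp 0) by (apply exp_increasing; nra).
      rewrite exp_0 in *. lra.
    + assert (Hle : ln (1 - x) <= 1 / p * ln (1 - x)).
      { assert (0 <= (1 - 1 / p) * - ln (1 - x)) by (apply Rmult_le_pos; lra).
        replace (1 / p * ln (1 - x)) with (ln (1 - x) + (1 - 1 / p) * - ln (1 - x)) by ring.
        lra. }
      assert (Hexp : exp (ln (1 - x)) <= exp (1 / p * ln (1 - x))).
      { destruct Hle as [Hlt|Heq]; [left; apply exp_increasing, Hlt|right; rewrite <- Heq; reflexivity]. }
      rewrite exp_ln in Hexp by lra. lra.
  - unfold z. replace (1 - (1 - Rpower (1 - x) (1 / p))) with (Rpower (1 - x) (1 / p)) by ring.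
    unfold Rdiv at 1 3. rewrite !Rmult_1_l, !ln_Rinv, ln_Rpower by (try apply Rpower_pos; lra).
    field. lra.
Qed.

Section UnitParameters.
Variables c d : R.
Hypothesis hc : 0 < c <= 1.
Hypothesis hd : 0 < d <= 1.

Lemma Beta_pos : 0 < Beta c d.
Proof. apply (Beta_tcoef_cv c d hc hd). Qed.

(* 0 < a_n <= 1/(n+1), since t_n <= 1. *)
Lemma fcoef_le_log_coef (n : nat) : 0 < fcoef c d n <= / INR (S n).
Proof.
  split; [apply fcoef_pos; lra|].
  rewrite fcoef_tcoef. pose proof (tcoef_le_1 c d n hc hd).
  assert (0 < / INR (S n)) by (apply Rinv_0_lt_compat, lt_0_INR; lia). nra.
Qed.

(* 1/(n+1) <= B a_n, since t_n decreases to 1/B. *)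
Lemma log_coef_le_Beta_fcoef (n : nat) : / INR (S n) <= Beta c d * fcoef c d n.
Proof.
  destruct (Beta_tcoef_cv c d hc hd) as [HB Hlim].
  assert (Hdecr : Un_decreasing (fun N => tcoef c d (S (S N))))
    by (intros N; apply tcoef_S_le; auto).
  pose proof (decreasing_ineq _ _ Hdecr Hlim n).
  pose proof (tcoef_antitone c d n (S (S n)) hc hd ltac:(lia)).
  assert (Ht : 1 <= Beta c d * tcoef c d n).
  { rewrite <- (Rinv_r (Beta c d)) by lra. apply Rmult_le_compat_l; lra. }
  rewrite fcoef_tcoef.
  assert (0 < / INR (S n)) by (apply Rinv_0_lt_compat, lt_0_INR; lia). nra.
Qed.

Lemma F_series (x : R) : 0 < x < 1 ->
  infinite_sum (fun n => fcoef c d n * x ^ n) (F c d (c + d) x).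
Proof.
  intros Hx.
  assert (Hconv : {l | Un_cv (fun N => sum_f_R0 (fun n => fcoef c d n * x ^ n) N) l}).
  { apply Rseries_CV_comp with (Bn := fun n => / INR (S n) * x ^ n).
    - intros n. pose proof (fcoef_le_log_coef n).
      assert (0 <= x ^ n) by (apply pow_le; lra). split; nra.
    - exists (Q x). apply Q_series, Hx. }
  destruct Hconv as [l Hl].
  unfold F. rewrite hyp_term_fcoef by lra. apply epsilon_spec. exists l. exact Hl.
Qed.

Lemma F_le_Q (x : R) : 0 < x < 1 -> F c d (c + d) x <= Q x.
Proof.
  intros Hx. rewrite <- (Rmult_1_l (Q x)).
  eapply infinite_sum_le_scal; [|exact (F_series x Hx)|exact (Q_series x Hx)].
  intros n. pose proof (fcoef_le_log_coef n). assert (0 <= x ^ n) by (apply pow_le; lra). nra.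
Qed.

Lemma Q_le_Beta_F (x : R) : 0 < x < 1 -> Q x <= Beta c d * F c d (c + d) x.
Proof.
  intros Hx.
  eapply infinite_sum_le_scal; [|exact (Q_series x Hx)|exact (F_series x Hx)].
  intros n. pose proof (log_coef_le_Beta_fcoef n). assert (0 <= x ^ n) by (apply pow_le; lra). nra.
Qed.

(* F / Q is nonincreasing on (0,1): the coefficient ratio t_n is. *)
Lemma F_Q_cross (z x : R) : 0 < z <= x -> x < 1 ->
  F c d (c + d) x * Q z <= F c d (c + d) z * Q x.
Proof.
  intros Hz Hx.
  apply (series_ratio_antitone (fcoef c d) (fun n => / INR (S n)) z x).
  - intros m n Hmn. rewrite !fcoef_tcoef.
    pose proof (tcoef_antitone c d m n hc hd Hmn).
    assert (0 < / INR (S n) * / INR (S m))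
      by (apply Rmult_lt_0_compat; apply Rinv_0_lt_compat, lt_0_INR; lia).
    nra.
  - lra.
  - apply F_series; lra.
  - apply Q_series; lra.
  - apply F_series; lra.
  - apply Q_series; lra.
Qed.

Lemma h_le_1 (x : R) : 0 < x < 1 -> h c d x <= 1.
Proof.
  intros Hx. rewrite h_quotient by exact Hx. pose proof (Q_pos x Hx).
  apply Rmult_le_reg_r with (Q x); [lra|]. unfold Rdiv.
  rewrite Rmult_assoc, Rinv_l, Rmult_1_l, Rmult_1_r by lra. apply F_le_Q, Hx.
Qed.

Lemma Beta_h_ge_1 (x : R) : 0 < x < 1 -> 1 <= Beta c d * h c d x.
Proof.
  intros Hx. rewrite h_quotient by exact Hx. pose proof (Q_pos x Hx).
  apply Rmult_le_reg_r with (Q x); [lra|].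
  replace (Beta c d * (F c d (c + d) x / Q x) * Q x) with (Beta c d * F c d (c + d) x)
    by (field; lra).
  rewrite Rmult_1_l. apply Q_le_Beta_F, Hx.
Qed.

Lemma h_antitone (z x : R) : 0 < z <= x -> x < 1 -> h c d x <= h c d z.
Proof.
  intros Hz Hx. rewrite !h_quotient by lra.
  pose proof (Q_pos x ltac:(lra)). pose proof (Q_pos z ltac:(lra)).
  apply Rmult_le_reg_r with (Q z * Q x); [nra|].
  replace (F c d (c + d) x / Q x * (Q z * Q x)) with (F c d (c + d) x * Q z) by (field; lra).
  replace (F c d (c + d) z / Q z * (Q z * Q x)) with (F c d (c + d) z * Q x) by (field; lra).
  apply F_Q_cross; lra.
Qed.

(* Q(z) = Q(x) x / (p z) turns the cross inequality into F(z) >= F(x) x/(p z). *)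
Lemma F_power_substitution (x p : R) : 0 < x < 1 -> 1 <= p ->
  / p * F c d (c + d) x <= F c d (c + d) (1 - Rpower (1 - x) (1 / p)).
Proof.
  intros Hx Hp. destruct (power_substitution x p Hx Hp) as [Hz Hlog].
  set (z := 1 - Rpower (1 - x) (1 / p)) in *.
  set (Fx := F c d (c + d) x). set (Fz := F c d (c + d) z).
  pose proof (Q_pos x Hx).
  assert (HFx : 0 <= Fx).
  { pose proof (Q_le_Beta_F x Hx) as HQ. pose proof Beta_pos. fold Fx in HQ. nra. }
  assert (HQz : Q z = Q x * x / (p * z)) by (unfold Q; rewrite Hlog; field; lra).
  pose proof (F_Q_cross z x Hz (proj2 Hx)) as Hcross. fold Fx Fz in Hcross.
  rewrite HQz in Hcross.
  assert (Hxz : Fx * x / (p * z) <= Fz).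
  { apply Rmult_le_reg_l with (Q x); [lra|].
    replace (Q x * (Fx * x / (p * z))) with (Fx * (Q x * x / (p * z))) by (field; lra).
    lra. }
  eapply Rle_trans; [|exact Hxz].
  replace (Fx * x / (p * z)) with (/ p * Fx * (x / z)) by (field; lra).
  rewrite <- (Rmult_1_r (/ p * Fx)) at 1.
  apply Rmult_le_compat_l.
  - apply Rmult_le_pos; [left; apply Rinv_0_lt_compat|]; lra.
  - apply Rmult_le_reg_r with z; [lra|]. unfold Rdiv.
    rewrite Rmult_assoc, Rinv_l; lra.
Qed.

End UnitParameters.

(* c = d = 1: t_n = 1, so B = 1 and F(1,1;2;x) = Q(x). *)
Lemma Beta_unit : Beta 1 1 = 1.
Proof.
  destruct (Beta_tcoef_cv 1 1 ltac:(lra) ltac:(lra)) as [HB Hlim].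
  assert (Hconst : Un_cv (fun N => tcoef 1 1 (S (S N))) 1).
  { eapply Un_cv_ext; [intros N; symmetry; apply tcoef_unit|].
    apply is_lim_seq_Reals, is_lim_seq_const. }
  rewrite <- (Rinv_inv (Beta 1 1)), (UL_sequence _ _ _ Hlim Hconst). apply Rinv_1.
Qed.

Lemma h_unit (x : R) : 0 < x < 1 -> h 1 1 x = 1.
Proof.
  intros Hx. rewrite h_quotient by exact Hx.
  assert (HF : F 1 1 (1 + 1) x = Q x).
  { eapply uniqueness_sum; [apply F_series; lra|].
    replace (fun n => fcoef 1 1 n * x ^ n) with (fun n => / INR (S n) * x ^ n).
    - apply Q_series, Hx.
    - apply functional_extensionality; intros n. rewrite fcoef_tcoef, tcoef_unit. ring. }
  rewrite HF. pose proof (Q_pos x Hx). field. lra.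
Qed.

Theorem mainTheorem4 (c d p : R)
  (hc : 0 < c <= 1) (hd : 0 < d <= 1) (hp : 1 <= p) :
  (forall x : R, 0 < x < 1 ->
     let z := 1 - Rpower (1 - x) (1 / p) in
     Beta c d >= Beta c d * h c d z /\
     Beta c d * h c d z >= Beta c d * h c d x /\
     Beta c d * h c d x >= 1 /\
     F c d (c + d) z >= / p * F c d (c + d) x) /\
  (c = 1 -> d = 1 -> Beta c d = 1 /\ forall x : R, 0 < x < 1 -> h c d x = 1).
Proof.
  split.
  - intros x Hx z. destruct (power_substitution x p Hx hp) as [Hz _]. fold z in Hz.
    pose proof (Beta_pos c d hc hd) as HB.
    pose proof (h_le_1 c d hc hd z ltac:(lra)) as Hhz.
    pose proof (h_antitone c d hc hd z x Hz (proj2 Hx)) as Hmono.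
    pose proof (Beta_h_ge_1 c d hc hd x Hx) as Hhx.
    pose proof (F_power_substitution c d hc hd x p Hx hp) as HF.
    repeat split; apply Rle_ge.
    + nra.
    + apply Rmult_le_compat_l; lra.
    + exact Hhx.
    + exact HF.
  - intros -> ->. split; [exact Beta_unit|exact h_unit].
Qed.
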